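(* With $\mathbb{K}$, $I$, $\mathcal G=(g_0,\dots,g_s)$, $n_i=\deg_y(g_i)$ and $A_0,A_1,\dots$ as in the context, for every integer $n\ge n_s$ the $\mathbb{K}[x]$-module $I_{\le(.,n)}=\{f\in I:\deg_y(f)\le n\}$ is free of rank $n-n_s+1$, with basis $A_{n_s},A_{n_s+1},\dots,A_n$.
   Context: Let $\mathbb{K}$ be a field and $I\subseteq\mathbb{K}[x,y]$ an ideal. Let $\mathcal G=(g_0,\dots,g_s)$ be the reduced minimal Gröbner basis of $I$ for the lexicographic order with $x\prec y$, listed in decreasing order, and $n_i=\deg_y(g_i)$ (so $n_0> n_1>\cdots> n_s$). Define polynomials $A_0,A_1,\dots$ recursively: for $0\le i<n_s$, $A_i=0$; if there is $k\in\{0,\dots,s\}$ with $n_k=i$, then $A_i=g_k$; otherwise ($i>n_s$ and $i\notin\{n_0,\dots,n_s\}$), $A_i$ is obtained from $yA_{i-1}$ by keeping its part of $y$-degree $\ge i$ unchanged and replacing its part of $y$-degree $<i$ by the normal form of that part modulo $\mathcal G$. For a subset $S\subseteq\mathbb{K}[x,y]$, $S_{\le(.,n)}$ denotes the elements of $S$ of $y$-degree at most $n$. *)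

(* K[x,y] is represented as {poly {poly K}}:
   the outer variable 'X is y, the coefficients are in K[x].
   A monomial x^i y^j is encoded as the pair (i, j). *)
From HB Require Import structures.
From mathcomp Require Import all_boot all_order all_algebra.
From Stdlib Require Import ClassicalEpsilon.
Set Implicit Arguments. Unset Strict Implicit. Unset Printing Implicit Defensive.
Import GRing.Theory.
Local Open Scope ring_scope.

Section Bivariate.
Variable K : fieldType.
Local Notation P2 := {poly {poly K}}.

(* y-degree (deg_y 0 = 0 by convention; only used on nonzero polys). *)
Definition degy (f : P2) : nat := (size f).-1.

(* leading monomial (x-exponent, y-exponent) for lex with x < y:
   largest y-degree first, then largest x-degree. *)
Definition LM (f : P2) : nat * nat := ((size (lead_coef f)).-1, (size f).-1).
Definition LC (f : P2) : K := lead_coef (lead_coef f).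

Definition mdiv (m1 m2 : nat * nat) : bool := (m1.1 <= m2.1)%N && (m1.2 <= m2.2)%N.
Definition mlt (m1 m2 : nat * nat) : bool :=
  (m1.2 < m2.2)%N || ((m1.2 == m2.2) && (m1.1 < m2.1)%N).

Definition in_supp (f : P2) (m : nat * nat) : bool := (f`_m.2)`_m.1 != 0.

Definition is_ideal (I : P2 -> Prop) : Prop :=
  [/\ I 0, (forall f g, I f -> I g -> I (f + g)) & (forall c f, I f -> I (c * f))].

Definition ideal_gen (G : seq P2) (f : P2) : Prop :=
  exists c : seq P2, f = \sum_(k < size G) c`_k * G`_k.

Definition groebner (I : P2 -> Prop) (G : seq P2) : Prop :=
  (forall g, g \in G -> g != 0 /\ I g) /\
  (forall f, I f -> f != 0 -> exists2 g, g \in G & mdiv (LM g) (LM f)).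

Definition minimalGB (G : seq P2) : Prop :=
  (forall g, g \in G -> LC g = 1) /\
  (forall k k', (k < size G)%N -> (k' < size G)%N -> k != k' ->
     ~~ mdiv (LM G`_k') (LM G`_k)).

Definition reducedGB (G : seq P2) : Prop :=
  (forall g, g \in G -> LC g = 1) /\
  (forall k k', (k < size G)%N -> (k' < size G)%N -> k != k' ->
     forall m, in_supp G`_k m -> ~~ mdiv (LM G`_k') m).

Definition decreasingGB (G : seq P2) : Prop :=
  sorted (fun g h => mlt (LM h) (LM g)) G.

(* r is a normal form of p modulo G: p - r in <G> and no monomial of r
   is divisible by a leading monomial of G (unique when G is a GB). *)
Definition is_nf (G : seq P2) (p r : P2) : Prop :=
  ideal_gen G (p - r) /\
  (forall m, in_supp r m -> forall g, g \in G -> ~~ mdiv (LM g) m).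

Definition NF (G : seq P2) (p : P2) : P2 :=
  epsilon (inhabits p) (fun r => is_nf G p r).

Definition ns (G : seq P2) : nat := degy (last 0 G).

Definition Astep (G : seq P2) (i : nat) (prev : P2) : P2 :=
  if (i < ns G)%N then 0
  else if has (fun g => degy g == i) G then nth 0 G (find (fun g => degy g == i) G)
  else let q := 'X * prev in (q - take_poly i q) + NF G (take_poly i q).

Fixpoint Aseq (G : seq P2) (i : nat) : P2 :=
  match i with
  | 0 => Astep G 0 0
  | i'.+1 => Astep G i'.+1 (Aseq G i')
  end.

End Bivariate.

(* For d >= n_s, A_d lies in I, has y-degree exactly d, and its leading
   coefficient in K[x] has minimal degree among the elements of G of y-degree
   at most d: either A_d is itself such a g, or it inherits the leading
   coefficient of A_(d-1) because no element of G has y-degree d.  Since G is a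
   Groebner basis, the leading coefficient of A_(deg_y f) then divides that of
   every nonzero f in I, so f can be reduced to y-degree < deg_y f by a K[x]-
   multiple of A_(deg_y f); iterating yields the span.  Freeness holds because
   the A_d have pairwise distinct y-degrees. *)

From HB Require Import structures.
From mathcomp Require Import all_boot all_order all_algebra.
From mathcomp Require Import zify.
From Stdlib Require Import ClassicalEpsilon.
Import GRing.Theory.
Local Open Scope ring_scope.
Set Implicit Arguments. Unset Strict Implicit. Unset Printing Implicit Defensive.

Lemma size_poly_eqS (R : nzRingType) (p : {poly R}) n :
  p`_n != 0 -> (forall k, (n < k)%N -> p`_k = 0) -> size p = n.+1.
Proof.
move=> pn_neq0 p_hi; apply/anti_leq/andP; split; first exact/leq_sizeP.
by rewrite ltnNge; apply: contra pn_neq0 => /leq_sizeP->.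
Qed.

Section Bivariate.
Variable K : fieldType.
Local Notation P2 := {poly {poly K}}.

Lemma in_supp_LM (f : P2) : f != 0 -> in_supp f (LM f).
Proof. by move=> f_neq0; rewrite /in_supp /= !lead_coef_eq0. Qed.

Lemma in_suppD (p q : P2) m : in_supp (p + q) m -> in_supp p m || in_supp q m.
Proof.
rewrite /in_supp coefD coefD -negb_and; apply: contra => /andP[/eqP-> /eqP->].
by rewrite addr0.
Qed.

Lemma size_coef_subr_top (p h : P2) i j :
  (size p <= j.+1)%N -> (size (p`_j)%R <= i.+1)%N ->
  (size h <= j.+1)%N -> (size (h`_j)%R <= i.+1)%N -> (h`_j)`_i = (p`_j)`_i ->
  (size (p - h)%R <= j.+1)%N /\ (size ((p - h)%R`_j)%R <= i)%N.
Proof.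
move=> sp spj sh shj hpji; split.
  by rewrite (leq_trans (size_polyD _ _)) // size_polyN geq_max sp sh.
apply/leq_sizeP => k; rewrite leq_eqVlt coefB => /orP[/eqP <-|ik].
  by rewrite coefB hpji subrr.
by rewrite coefB (nth_default _ (leq_trans spj ik)) (nth_default _ (leq_trans shj ik)) subrr.
Qed.

Lemma monomial_top (c : K) i j :
  let m : P2 := (c *: 'X^i)%:P * 'X^j in
  [/\ (size m <= j.+1)%N, (size (m`_j)%R <= i.+1)%N, (m`_j)`_i = c &
      forall u v, in_supp m (u, v) -> (u, v) = (i, j)].
Proof.
have coefm v : ((c *: 'X^i)%:P * 'X^j : P2)`_v = (c *: 'X^i) * (v == j)%:R.
  by rewrite coefCM coefXn.
split.
- by apply/leq_sizeP => v jv; rewrite coefm gtn_eqF ?mulr0.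
- by rewrite coefm eqxx mulr1 (leq_trans (size_scale_leq _ _)) // size_polyXn.
- by rewrite coefm eqxx mulr1 coefZ coefXn eqxx mulr1.
move=> u v; rewrite /in_supp /= coefm.
case: (eqVneq v j) => [->|_]; last by rewrite mulr0 coef0 eqxx.
by rewrite mulr1 coefZ coefXn; case: (eqVneq u i) => [->|_]; rewrite ?mulr0 ?eqxx.
Qed.

Lemma monic_multiple_top (g : P2) (c : K) i j :
  g != 0 -> LC g = 1 -> mdiv (LM g) (i, j) ->
  exists q : P2, let h := q * g in
  [/\ (size h <= j.+1)%N, (size (h`_j)%R <= i.+1)%N & (h`_j)`_i = c].
Proof.
rewrite /mdiv /LC /LM /= => g_neq0 lcg /andP[].
set a := (size (lead_coef g)).-1; set e := (size g).-1 => ai ej.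
have sg : size g = e.+1 by rewrite prednK // size_poly_gt0.
have slg : size (lead_coef g) = a.+1 by rewrite prednK // size_poly_gt0 lead_coef_eq0.
exists ((c *: 'X^(i - a))%:P * 'X^(j - e)).
have coefh k : ((c *: 'X^(i - a))%:P * 'X^(j - e) * g)`_k =
    c *: 'X^(i - a) * (if (k < j - e)%N then 0 else g`_(k - (j - e))).
  by rewrite -mulrA coefCM coefXnM.
have hj : ((c *: 'X^(i - a))%:P * 'X^(j - e) * g)`_j = c *: ('X^(i - a) * lead_coef g).
  rewrite coefh ltnNge leq_subr /= subKn // scalerAl.
  by congr (_ * _); rewrite /lead_coef sg.
have coef_hj k : (c *: ('X^(i - a) * lead_coef g))`_k =
    c * (if (k < i - a)%N then 0 else (lead_coef g)`_(k - (i - a))).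
  by rewrite coefZ coefXnM.
split.
- apply/leq_sizeP => k jk; rewrite coefh; case: ifP => _; first by rewrite mulr0.
  by rewrite nth_default ?mulr0 // sg; lia.
- rewrite hj; apply/leq_sizeP => k ik; rewrite coef_hj; case: ifP => _; first by rewrite mulr0.
  by rewrite nth_default ?mulr0 // slg; lia.
- rewrite hj coef_hj ltnNge leq_subr /= subKn //.
  by rewrite -[X in _ = X]mulr1 -lcg [lead_coef (lead_coef g)]/lead_coef slg.
Qed.

Definition irreducible_mod (G : seq P2) (r : P2) : Prop :=
  forall m, in_supp r m -> forall g, g \in G -> ~~ mdiv (LM g) m.

Section IdealGen.
Variable G : seq P2.

Lemma ideal_genP f : ideal_gen G f <-> exists c : nat -> P2, f = \sum_(k < size G) c k * G`_k.
Proof.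
split=> [[c ->]|[c ->]]; first by exists (fun k => c`_k).
by exists (mkseq c (size G)); apply: eq_bigr => k _; rewrite nth_mkseq.
Qed.

Lemma ideal_gen0 : ideal_gen G 0.
Proof. by apply/ideal_genP; exists (fun _ => 0); rewrite big1 // => k _; rewrite mul0r. Qed.

Lemma ideal_genD f h : ideal_gen G f -> ideal_gen G h -> ideal_gen G (f + h).
Proof.
move=> /ideal_genP[c ->] /ideal_genP[d ->]; apply/ideal_genP.
by exists (fun k => c k + d k); rewrite -big_split; apply: eq_bigr => k _; rewrite mulrDl.
Qed.

Lemma ideal_genM q f : ideal_gen G f -> ideal_gen G (q * f).
Proof.
move=> /ideal_genP[c ->]; apply/ideal_genP.
by exists (fun k => q * c k); rewrite mulr_sumr; apply: eq_bigr => k _; rewrite mulrA.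
Qed.

Lemma ideal_genB f h : ideal_gen G f -> ideal_gen G h -> ideal_gen G (f - h).
Proof. by move=> Gf Gh; rewrite -mulN1r; apply/ideal_genD/ideal_genM. Qed.

Lemma ideal_gen_mem g : g \in G -> ideal_gen G g.
Proof.
move=> gG; apply/ideal_genP; exists (fun k => (k == index g G)%:R).
have gi : (index g G < size G)%N by rewrite index_mem.
rewrite (bigD1 (Ordinal gi)) //= eqxx mul1r nth_index // big1 ?addr0 // => k.
by rewrite -val_eqE /= => /negbTE->; rewrite mul0r.
Qed.

Lemma ideal_gen_sub (I : P2 -> Prop) :
  is_ideal I -> (forall g, g \in G -> I g) -> forall f, ideal_gen G f -> I f.
Proof.
case=> I0 ID IM GI f /ideal_genP[c ->].
by apply: (big_ind I) => // k _; apply/IM/GI/mem_nth.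
Qed.

Hypothesis G_monic : forall g, g \in G -> g != 0 /\ LC g = 1.

Lemma nf_exists j (p : P2) : (size p <= j)%N ->
  exists2 r : P2, (size r <= j)%N & ideal_gen G (p - r) /\ irreducible_mod G r.
Proof.
elim: j p => [|j IHj] p.
  rewrite size_poly_leq0 => /eqP->; exists 0; rewrite ?size_poly0 // subr0.
  by split=> [|m]; [exact: ideal_gen0 | rewrite /in_supp !coef0 eqxx].
suff: forall i (p : P2), (size p <= j.+1)%N -> (size (p`_j)%R <= i)%N ->
    exists2 r : P2, (size r <= j.+1)%N & ideal_gen G (p - r) /\ irreducible_mod G r.
  by move=> nf_top sp; exact: nf_top _ p sp (leqnn _).
elim=> [|i IHi] {}p sp spj.
  have [|r sr nf_r] := IHj p; last by exists r; rewrite ?leqW.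
  apply/leq_sizeP => k; rewrite leq_eqVlt => /orP[/eqP<-|jk].
    by apply/eqP; rewrite -size_poly_leq0.
  exact/(leq_sizeP _ _ sp).
have [spj'|ispj] := leqP (size (p`_j)%R) i; first exact: IHi.
set c := (p`_j)`_i.
have [/hasP[g gG LMg_ij]|nodiv] := boolP (has (fun g => mdiv (LM g) (i, j)) G).
  have [g_neq0 lcg] := G_monic gG.
  have [q [sh shj hji]] := monic_multiple_top c g_neq0 lcg LMg_ij.
  have [spqg spqgj] := size_coef_subr_top sp spj sh shj hji.
  have [r sr [Gr irr_r]] := IHi _ spqg spqgj.
  exists r => //; split=> //.
  have -> : p - r = (p - q * g - r) + q * g by rewrite addrAC subrK.
  by apply: ideal_genD Gr _; apply/ideal_genM/ideal_gen_mem.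
have [sm smj mji supp_m] := monomial_top c i j.
have [spm spmj] := size_coef_subr_top sp spj sm smj mji.
have [r sr [Gr irr_r]] := IHi _ spm spmj.
exists (r + (c *: 'X^i)%:P * 'X^j).
  by rewrite (leq_trans (size_polyD _ _)) // geq_max sr.
split; first by rewrite opprD addrA addrAC.
move=> [u v] /in_suppD/orP[/irr_r//|/supp_m[-> ->]] g gG.
by apply: contra nodiv => dv; apply/hasP; exists g.
Qed.

End IdealGen.

Section Groebner.
Variables (I : P2 -> Prop) (G : seq P2).
Hypotheses (HI : is_ideal I) (HG : groebner I G) (Hmin : minimalGB G).

Let ideal_gen_subI : forall f, ideal_gen G f -> I f.
Proof. by apply: ideal_gen_sub => // g /(proj1 HG)[]. Qed.

Let G_monic g : g \in G -> g != 0 /\ LC g = 1.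
Proof. by move=> gG; split; [case: (proj1 HG g gG) | exact: (proj1 Hmin)]. Qed.

(* Two normal forms of p differ by an element of I none of whose monomials is
   divisible by a leading monomial of G; for a Groebner basis it must vanish. *)
Lemma nf_unique (p r1 r2 : P2) :
  ideal_gen G (p - r1) -> irreducible_mod G r1 ->
  ideal_gen G (p - r2) -> irreducible_mod G r2 -> r1 = r2.
Proof.
move=> Gr1 irr1 Gr2 irr2; apply/eqP; rewrite -subr_eq0; apply/negPn/negP => r12_neq0.
have I_r12 : I (r1 - r2).
  have -> : r1 - r2 = (p - r2) - (p - r1) by rewrite opprB [in RHS]addrC addrA subrK.
  exact/ideal_gen_subI/ideal_genB.
have [g gG dv] := proj2 HG _ I_r12 r12_neq0.
have /in_suppD/orP[s1|s2] : in_supp (r1 + - r2) (LM (r1 - r2)) by exact: in_supp_LM.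
  by move: (irr1 _ s1 _ gG); rewrite dv.
have {}s2 : in_supp r2 (LM (r1 - r2)) by move: s2; rewrite /in_supp !coefN oppr_eq0.
by move: (irr2 _ s2 _ gG); rewrite dv.
Qed.

Lemma NF_spec j (p : P2) : (size p <= j)%N ->
  [/\ (size (NF G p) <= j)%N, ideal_gen G (p - NF G p) & irreducible_mod G (NF G p)].
Proof.
move=> sp; have [r sr [Gr irr_r]] := nf_exists G_monic sp.
have [Gnf irr_nf] : is_nf G p (NF G p) by apply: epsilon_spec; exists r.
by rewrite (nf_unique Gnf irr_nf Gr irr_r).
Qed.

Hypotheses (Hdec : decreasingGB G) (G_neq0 : G != [::]).

Lemma ns_le_degy g : g \in G -> (ns G <= degy g)%N.
Proof.
have mlt_trans : transitive (fun g h : P2 => mlt (LM h) (LM g)).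
  by move=> b a c; rewrite /mlt; lia.
rewrite /ns; elim: G Hdec => [//|g0 s IHs] /= sorted_s.
have s_lt := order_path_min mlt_trans sorted_s.
case: s IHs sorted_s s_lt => [|g1 s] IHs sorted_s s_lt; first by rewrite inE => /eqP->.
rewrite inE => /orP[/eqP->|gs]; last exact: IHs (path_sorted sorted_s) gs.
by have := allP s_lt _ (mem_last g1 s); rewrite /mlt /degy /LM /=; lia.
Qed.

Lemma has_degy_ns : has (fun g => degy g == ns G) G.
Proof.
by apply/hasP; exists (last 0 G); case: G G_neq0 => // g s _; rewrite /= mem_last.
Qed.

Definition lead_minimal (d : nat) (a : P2) : Prop :=
  [/\ I a, size a = d.+1 &
   forall g, g \in G -> (degy g <= d)%N -> (size (lead_coef a) <= size (lead_coef g))%N].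

Lemma lead_minimal_Astep_has d prev : has (fun g => degy g == d) G ->
  lead_minimal d (Astep G d prev).
Proof.
move=> Gd; have ns_d : (ns G <= d)%N.
  by have /hasP[g gG /eqP <-] := Gd; exact: ns_le_degy.
rewrite /Astep ltnNge ns_d /= Gd.
set P := fun g => degy g == d; set k := find P G; set gd := nth 0 G k.
have kG : (k < size G)%N by rewrite -has_find.
have gdG : gd \in G by exact: mem_nth.
have [gd_neq0 _] := G_monic gdG.
have sgd : size gd = d.+1 by rewrite -(eqP (nth_find 0 Gd)) prednK // size_poly_gt0.
split=> // [|g gG dg]; first by case: (proj1 HG gd gdG).
rewrite leqNgt; apply/negP => lt_g.
have gi : (index g G < size G)%N by rewrite index_mem.
have k_neq : k != index g G.
  by apply: contraTneq lt_g => k_eq; rewrite /gd k_eq nth_index // ltnn.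
have := proj2 Hmin _ _ kG gi k_neq; rewrite nth_index // /mdiv /LM /= -/gd sgd.
by move: dg lt_g; rewrite /degy /=; lia.
Qed.

Lemma lead_minimal_Astep_hasN d prev : (ns G <= d)%N ->
  ~~ has (fun g => degy g == d.+1) G -> lead_minimal d prev ->
  lead_minimal d.+1 (Astep G d.+1 prev).
Proof.
move=> ns_d Gd [I_prev sprev min_prev]; rewrite /Astep ltnNge (leqW ns_d) /= (negbTE Gd).
set q := 'X * prev; set t := take_poly d.+1 q.
have [snf Gnf _] := NF_spec (size_take_poly d.+1 q).
have top_q k : (d.+1 <= k)%N -> (q - t + NF G t)`_k = q`_k.
  move=> dk; rewrite coefD coefB coef_take_poly ltnNge dk /= subr0.
  by rewrite (nth_default _ (leq_trans snf dk)) addr0.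
have prev_neq0 : prev != 0 by rewrite -size_poly_gt0 sprev.
have sq : size q = d.+2 by rewrite /q mulrC size_mulX // sprev.
have lcq : lead_coef q = lead_coef prev by rewrite /q mulrC lead_coefMX.
have sA : size (q - t + NF G t) = d.+2.
  apply: size_poly_eqS => [|k dk]; rewrite top_q ?(ltnW dk) //.
    by rewrite -[q`_d.+1]/(q`_(d.+2.-1)) -sq -/(lead_coef q) lead_coef_eq0 -size_poly_gt0 sq.
  by rewrite nth_default // sq.
split=> // [|g gG dg].
  have -> : q - t + NF G t = q + (-1) * (t - NF G t) by rewrite mulN1r opprB addrA addrAC.
  by case: HI => _ ID IM; apply/ID/IM/ideal_gen_subI; first exact: IM.
have -> : lead_coef (q - t + NF G t) = lead_coef q by rewrite /lead_coef sA sq top_q.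
rewrite lcq min_prev //; move: dg; rewrite leq_eqVlt => /orP[/eqP dg|] //.
by move/hasPn: Gd => /(_ g gG); rewrite dg eqxx.
Qed.

Lemma lead_minimal_Aseq d : (ns G <= d)%N -> lead_minimal d (Aseq G d).
Proof.
elim: d => [|d IHd] ns_d.
  by apply: lead_minimal_Astep_has; move: ns_d; rewrite leqn0 => /eqP <-; exact: has_degy_ns.
have [Gd|Gd] := boolP (has (fun g => degy g == d.+1) G); first exact: lead_minimal_Astep_has.
have {}ns_d : (ns G <= d)%N.
  by rewrite -ltnS ltn_neqAle ns_d andbT; apply: contraNneq Gd => <-; exact: has_degy_ns.
exact: lead_minimal_Astep_hasN ns_d Gd (IHd ns_d).
Qed.

Lemma ns_le_degyI f : I f -> f != 0 -> (ns G <= degy f)%N.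
Proof.
move=> If f_neq0; have [g gG /andP[_ dg]] := proj2 HG f If f_neq0.
exact: leq_trans (ns_le_degy gG) dg.
Qed.

Lemma size_lead_Aseq_min f : I f -> f != 0 ->
  (size (lead_coef (Aseq G (degy f))) <= size (lead_coef f))%N.
Proof.
move=> If f_neq0; have [g gG /andP[/= lg dg]] := proj2 HG f If f_neq0.
have [_ _ min_A] := lead_minimal_Aseq (ns_le_degyI If f_neq0).
apply: leq_trans (min_A g gG dg) _.
have [g_neq0 _] := G_monic gG.
by move: lg; rewrite -ltnS !prednK // size_poly_gt0 lead_coef_eq0.
Qed.

(* Otherwise the remainder of the division in K[x] would be the leading
   coefficient of an element of I of the same y-degree and smaller x-degree. *)
Lemma lead_Aseq_dvd f : I f -> f != 0 -> lead_coef (Aseq G (degy f)) %| lead_coef f.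
Proof.
move=> If f_neq0; set s := degy f; set a := Aseq G s.
have [Ia sa _] := lead_minimal_Aseq (ns_le_degyI If f_neq0).
have sf : size f = s.+1 by rewrite prednK // size_poly_gt0.
have lca_neq0 : lead_coef a != 0 by rewrite lead_coef_eq0 -size_poly_gt0 sa.
set f' := f - (lead_coef f %/ lead_coef a)%:P * a.
have If' : I f'.
  by case: HI => _ ID IM; rewrite /f' -mulN1r; apply/ID/IM/IM.
have coef_f' k : (s <= k)%N -> f'`_k = if k == s then lead_coef f %% lead_coef a else 0.
  rewrite leq_eqVlt => /orP[/eqP<-|sk]; rewrite /f' coefB coefCM.
    have -> : f`_s = lead_coef f by rewrite /lead_coef sf.
    have -> : a`_s = lead_coef a by rewrite /lead_coef sa.
    by rewrite eqxx {1}(divp_eq (lead_coef f) (lead_coef a)) addrC addKr.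
  by rewrite gtn_eqF // !nth_default ?mulr0 ?subr0 // ?sf ?sa.
apply/modp_eq0P/eqP/negPn/negP => mod_neq0.
suff : (size (lead_coef a) < size (lead_coef a))%N by rewrite ltnn.
have sf' : size f' = s.+1 by apply: size_poly_eqS => [|k sk]; rewrite coef_f' ?eqxx ?gtn_eqF ?(ltnW sk).
have f'_neq0 : f' != 0 by rewrite -size_poly_gt0 sf'.
have lcf' : lead_coef f' = lead_coef f %% lead_coef a.
  by rewrite /lead_coef sf' coef_f' // eqxx.
have := size_lead_Aseq_min If' f'_neq0; rewrite /degy sf' lcf' /= => le_a.
by apply: leq_ltn_trans le_a _; rewrite ltn_modp.
Qed.

Lemma Aseq_span N s f : I f -> (size f <= s)%N -> (s <= ns G + N)%N ->
  exists c : nat -> {poly K}, f = \sum_(k < N) (c k)%:P * Aseq G (ns G + k).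
Proof.
elim: s f => [|s IHs] f If sf sN.
  move: sf; rewrite size_poly_leq0 => /eqP->; exists (fun=> 0).
  by rewrite big1 // => k _; rewrite mul0r.
have [sf_s|] := leqP (size f) s; first exact: IHs (ltnW sN).
move=> lt_sf; have {lt_sf}sf : size f = s.+1 by apply/anti_leq; rewrite sf lt_sf.
have f_neq0 : f != 0 by rewrite -size_poly_gt0 sf.
have ns_s : (ns G <= s)%N by have := ns_le_degyI If f_neq0; rewrite /degy sf.
have [Ia sa _] := lead_minimal_Aseq ns_s.
set a := Aseq G s in Ia sa *.
set u := lead_coef f %/ lead_coef a.
have dvd : lead_coef a %| lead_coef f by have := lead_Aseq_dvd If f_neq0; rewrite /degy sf.
have If' : I (f - u%:P * a).
  by case: HI => _ ID IM; rewrite -mulN1r; apply/ID/IM/IM.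
have sf' : (size (f - u%:P * a)%R <= s)%N.
  apply/leq_sizeP => k; rewrite leq_eqVlt coefB coefCM => /orP[/eqP<-|sk].
    have -> : f`_s = lead_coef f by rewrite /lead_coef sf.
    have -> : a`_s = lead_coef a by rewrite /lead_coef sa.
    by rewrite divpK // subrr.
  by rewrite !nth_default ?mulr0 ?subr0 ?sf ?sa.
have [c Ec] := IHs _ If' sf' (ltnW sN).
have sN' : (s - ns G < N)%N by rewrite ltn_subLR.
exists (fun k => c k + (k == s - ns G)%N%:R * u).
under eq_bigr do rewrite polyCD mulrDl.
rewrite big_split /= -Ec (bigD1 (Ordinal sN')) //= eqxx mul1r subnKC // -/a.
rewrite big1 ?addr0 ?subrK // => k; rewrite -val_eqE /= => /negbTE->.
by rewrite mul0r mul0r.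
Qed.

Lemma Aseq_free N (c : nat -> {poly K}) :
  \sum_(k < N) (c k)%:P * Aseq G (ns G + k) = 0 -> forall k, (k < N)%N -> c k = 0.
Proof.
elim: N c => [//|N IHN] c; rewrite big_ord_recr /= => sum0.
have [_ sN _] := lead_minimal_Aseq (leq_addr N (ns G)).
have cN : c N = 0.
  have := congr1 (fun p : P2 => p`_(ns G + N)) sum0.
  rewrite /= coefD coef_sum coefCM coef0 big1 ?add0r => [|k _]; last first.
    have [_ sk _] := lead_minimal_Aseq (leq_addr k (ns G)).
    by rewrite coefCM nth_default ?mulr0 // sk ltn_add2l.
  have : lead_coef (Aseq G (ns G + N)) != 0 by rewrite lead_coef_eq0 -size_poly_gt0 sN.
  by rewrite /lead_coef sN /= => lc_neq0 /eqP; rewrite mulf_eq0 (negbTE lc_neq0) orbF => /eqP.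
move=> k; rewrite ltnS leq_eqVlt => /orP[/eqP-> //|kN].
by apply: IHN kN; move: sum0; rewrite cN mul0r addr0.
Qed.

End Groebner.

End Bivariate.

Theorem lemma2 (K : fieldType) (I : {poly {poly K}} -> Prop) (G : seq {poly {poly K}}) :
  is_ideal I -> G != [::] -> groebner I G -> minimalGB G -> reducedGB G ->
  decreasingGB G ->
  forall n : nat, (ns G <= n)%N ->
    (forall k : 'I_(n - ns G + 1),
        I (Aseq G (ns G + k)) /\ (size (Aseq G (ns G + k)) <= n.+1)%N) /\
    (forall f, I f -> (size f <= n.+1)%N ->
        exists c : 'I_(n - ns G + 1) -> {poly K},
          f = \sum_(k < n - ns G + 1) (c k)%:P * Aseq G (ns G + k)) /\
    (forall c : 'I_(n - ns G + 1) -> {poly K},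
        \sum_(k < n - ns G + 1) (c k)%:P * Aseq G (ns G + k) = 0 ->
        forall k, c k = 0).
Proof.
move=> HI G_neq0 HG Hmin _ Hdec n ns_n; split; [|split].
- move=> k; have [IA sA _] := lead_minimal_Aseq HI HG Hmin Hdec G_neq0 (leq_addr k (ns G)).
  by split=> //; rewrite sA; have := ltn_ord k; lia.
- move=> f If sf; have [|c ->] := Aseq_span HI HG Hmin Hdec G_neq0 (N := n - ns G + 1) If sf.
    by lia.
  by exists (fun k => c k).
- move=> c sum0 k.
  pose c' j := if insub j is Some k then c k else 0.
  have := Aseq_free HI HG Hmin Hdec G_neq0 (c := c') _ (ltn_ord k); rewrite /c' valK; apply.
  by rewrite -[RHS]sum0; apply: eq_bigr => j _; rewrite /c' valK.
Qed.
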